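(* Let $G$ be a connected graph and $(u,v)\in V_p$. Then $r_w(u,v)=0$ for all $w\in V(G)\setminus\{u,v\}$ if and only if $V_i(u)\setminus\{v\}=V_i(v)\setminus\{u\}$ for every $1\le i\le\mathrm{diam}(G)$, where $V_i(x)=\{y\in V(G)\setminus\{x\}: d(x,y)=i\}$.
   Context: Graphs are finite, simple and connected; $d(u,v)$ denotes the shortest-path distance. $V_p$ denotes the set of all unordered pairs $(u,v)$ of distinct vertices. A vertex $x$ resolves the pair $(u,v)$ if $d(x,u)\neq d(x,v)$. For $(u,v)\in V_p$, $R(u,v)$ is the set of all vertices resolving $(u,v)$. The resolving share of a vertex $w$ for $(u,v)$ is $r_w(u,v)=\frac{1}{|R(u,v)|}$ if $w$ resolves $u$ and $v$, and $r_w(u,v)=0$ otherwise. (In the paper the condition $V_i(u)\setminus\{v\}=V_i(v)\setminus\{u\}$ for all $i$ is written $\Pi_u-\{v\}=\Pi_v-\{u\}$, where $\Pi_x=\{V_i(x):1\le i\le \mathrm{diam}(G)\}$ is the distance partition with respect to $x$.) *)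

From mathcomp Require Import all_boot all_order all_algebra rat.
Set Implicit Arguments. Unset Strict Implicit. Unset Printing Implicit Defensive.
Import Order.TTheory GRing.Theory Num.Theory.

Section Graph.
Variables (T : finType) (e : rel T).

Definition simple_graph := symmetric e /\ irreflexive e.
Definition connected_graph := forall x y : T, connect e x y.

Definition walk_of_len (x y : T) (n : nat) : bool :=
  [exists p : n.-tuple T, path e x p && (last x p == y)].

(* shortest-path distance: least n with a walk of length n from x to y
   (a shortest walk is a path, so n < #|T| for connected graphs) *)
Definition dist (x y : T) : nat :=
  nth #|T| (iota 0 #|T|) (find (walk_of_len x y) (iota 0 #|T|)).

Definition diam : nat := \max_(x : T) \max_(y : T) dist x y.

Definition Vlayer (i : nat) (x : T) : {set T} := [set y | (y != x) && (dist x y == i)].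

Definition resolves (w u v : T) : bool := dist w u != dist w v.

Definition resolving_set (u v : T) : {set T} := [set x | resolves x u v].

Definition rshare (w u v : T) : rat :=
  if resolves w u v then ((#|resolving_set u v|%:R)^-1)%R else 0%R.
End Graph.

(** A vertex [w] outside [{u, v}] has resolving share [0] exactly when it does
    not resolve [(u, v)], i.e. [d(w,u) = d(w,v)]; indeed a resolving [w] lies in
    [R(u,v)], so its share [1/|R(u,v)|] is nonzero.  Reading [d(u,w) = d(v,w)]
    layer by layer, this says that [w] lies in [V_i(u)] iff it lies in [V_i(v)]
    for [i = d(u,w)], which is between [1] and [diam G]. *)
From mathcomp Require Import all_boot all_order all_algebra.
Local Open Scope ring_scope.
Import GRing.Theory Num.Theory.

Section Distance.
Variables (T : finType) (e : rel T).

Lemma walk_of_len0 (x y : T) : walk_of_len e x y 0 = (x == y).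
Proof.
apply/existsP/eqP => [[p /andP [_ /eqP <-]]|->].
  by rewrite (size0nil (size_tuple p)).
by exists [tuple]; rewrite /= eqxx.
Qed.

Lemma walk_of_len_sym (x y : T) (n : nat) :
  symmetric e -> walk_of_len e x y n -> walk_of_len e y x n.
Proof.
move=> se /existsP [p /andP [e_p /eqP <-]]; apply/existsP.
have sz : size (rev (belast x p)) == n by rewrite size_rev size_belast size_tuple.
exists (Tuple sz); apply/andP; split.
  by rewrite /= rev_path (eq_path (e' := e)) // => a b; rewrite /= se.
by rewrite /=; case: (tval p) => [|a q] //=; rewrite rev_cons last_rcons.
Qed.

Lemma dist_sym (x y : T) : symmetric e -> dist e x y = dist e y x.
Proof.
move=> se; rewrite /dist (eq_find (a2 := walk_of_len e y x)) // => n.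
by apply/idP/idP; apply: walk_of_len_sym.
Qed.

Lemma dist_gt0 (x y : T) : x != y -> (0 < dist e x y)%N.
Proof.
move=> neq_xy; rewrite /dist.
have card_gt0 : (0 < #|T|)%N by apply/card_gt0P; exists x.
have [lt_find|le_find] := ltnP (find (walk_of_len e x y) (iota 0 #|T|)) #|T|; last first.
  by rewrite nth_default // size_iota.
rewrite nth_iota // add0n lt0n; apply: contra neq_xy => /eqP find0.
have has_walk : has (walk_of_len e x y) (iota 0 #|T|) by rewrite has_find size_iota.
by have := nth_find 0%N has_walk; rewrite find0 nth_iota // walk_of_len0.
Qed.

Lemma dist_le_diam (x y : T) : (dist e x y <= diam e)%N.
Proof.
exact: leq_trans (@leq_bigmax _ (dist e x) y)
                (@leq_bigmax _ (fun x => \max_(y : T) dist e x y) x).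
Qed.

Lemma rshare_eq0 (w u v : T) : (rshare e w u v == 0) = ~~ resolves e w u v.
Proof.
rewrite /rshare; case: ifP => [res_w|_]; last by rewrite eqxx.
rewrite invr_eq0 pnatr_eq0; apply/negbTE; rewrite -lt0n; apply/card_gt0P.
by exists w; rewrite inE.
Qed.

End Distance.

Theorem lemma2p4 (T : finType) (e : rel T) (u v : T) :
  simple_graph e -> connected_graph e -> u != v ->
  (forall w : T, w != u -> w != v -> rshare e w u v = 0) <->
  (forall i : nat, (1 <= i <= diam e)%N ->
     Vlayer e i u :\ v = Vlayer e i v :\ u).
Proof.
move=> [se _] _ neq_uv.
have share0E w : (rshare e w u v = 0) <-> (dist e u w = dist e v w).
  rewrite (dist_sym _ e u) // (dist_sym _ e v) //.
  split=> [/eqP|eq_d]; first by rewrite rshare_eq0 negbK => /eqP.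
  by apply/eqP; rewrite rshare_eq0 negbK eq_d.
split=> [share0 i _|layers w wu wv].
  apply/setP => y; rewrite !inE.
  have [->|yv] := eqVneq y v; first by rewrite andbF.
  have [->|yu] //= := eqVneq y u.
  by have /share0E -> := share0 y yu yv.
apply/share0E; have := layers (dist e u w).
rewrite dist_gt0 1?eq_sym // dist_le_diam => /(_ isT) /setP /(_ w).
by rewrite !inE wu wv eqxx /= => /esym /eqP.
Qed.
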